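(* Let $G$ and $H$ be connected graphs with no self-loops. Then $G$ and $H$ are strongly disjoint if and only if they are weakly disjoint and exactly one of the two graphs is a tree.
   Context: A weight function on a finite set $U$ is a map $\alpha:U\times U\to\mathbb{R}$ with $\alpha\ge 0$, $\alpha(u,u')=\alpha(u',u)$, and $\sum_{u,u'}\alpha(u,u')=1$; its degree function is $p(u)=\sum_{u'}\alpha(u,u')$. A graph is $G=(U,\alpha)$ with $U$ finite; edges are pairs $(u,u')$ with $\alpha(u,u')>0$; a self-loop is an edge $(u,u)$. $G$ is connected if any two distinct vertices are joined by a path of edges; a tree is a connected graph (viewed as an undirected graph) with no cycles. For graphs $G=(U,\alpha)$, $H=(V,\beta)$ with degree functions $p,q$, a weight joining is a weight function $\gamma$ on $U\times V$ whose degree function $r(u,v)=\sum_{(u',v')}\gamma((u,v),(u',v'))$ satisfies (a) $\sum_v r(u,v)=p(u)$, $\sum_u r(u,v)=q(v)$, and (b) $p(u)\sum_{\tilde v}\gamma((u,v),(u',\tilde v))=\alpha(u,u')r(u,v)$ and $q(v)\sum_{\tilde u}\gamma((u,v),(\tilde u,v'))=\beta(v,v')r(u,v)$ for all $u,u',v,v'$. A graph joining is $K=(U\times V,\gamma)$ with $\gamma$ a weight joining; $\mathcal{J}(G,H)$ is the set of graph joinings. The tensor product is $G\otimes H=(U\times V,\alpha\otimes\beta)$ with $(\alpha\otimes\beta)((u,v),(u',v'))=\alpha(u,u')\beta(v,v')$; it always lies in $\mathcal{J}(G,H)$. $G,H$ are strongly disjoint if $\mathcal{J}(G,H)=\{G\otimes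 H\}$, and weakly disjoint if every $K\in\mathcal{J}(G,H)$ has degree function $r(u,v)=p(u)q(v)$. *)

From HB Require Import structures.
From mathcomp Require Import all_boot all_order all_algebra.
From mathcomp Require Import reals.
Set Implicit Arguments. Unset Strict Implicit. Unset Printing Implicit Defensive.
Import Order.TTheory GRing.Theory Num.Theory.
Local Open Scope ring_scope.

Section Defs.
Variable R : realType.

Definition is_weight (U : finType) (a : U -> U -> R) : Prop :=
  [/\ forall u u', 0 <= a u u',
      forall u u', a u u' = a u' u &
      \sum_(u : U) \sum_(u' : U) a u u' = 1].

Definition degf (U : finType) (a : U -> U -> R) (u : U) : R :=
  \sum_(u' : U) a u u'.

Definition edge (U : finType) (a : U -> U -> R) : rel U :=
  fun u u' => 0 < a u u'.

Definition no_self_loops (U : finType) (a : U -> U -> R) : Prop :=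
  forall u, a u u = 0.

Definition connected_graph (U : finType) (a : U -> U -> R) : Prop :=
  forall u u', connect (edge a) u u'.

(* no cycle: no closed walk through >= 3 pairwise distinct vertices
   (self-loops and cycles of length 2 are excluded separately: the
   graph is undirected and simple, loops are handled by no_self_loops) *)
Definition acyclic (U : finType) (a : U -> U -> R) : Prop :=
  (forall u, a u u = 0) /\
  forall p : seq U, (3 <= size p)%N -> uniq p -> ~~ cycle (edge a) p.

Definition is_tree (U : finType) (a : U -> U -> R) : Prop :=
  connected_graph a /\ acyclic a.

Definition tensorw (U V : finType) (a : U -> U -> R) (b : V -> V -> R)
  : U * V -> U * V -> R :=
  fun x y => a x.1 y.1 * b x.2 y.2.

Definition weight_joining (U V : finType) (a : U -> U -> R) (b : V -> V -> R)
    (g : U * V -> U * V -> R) : Prop :=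
  let p := degf a in let q := degf b in let r := degf g in
  [/\ is_weight g,
      forall u, \sum_(v : V) r (u, v) = p u,
      forall v, \sum_(u : U) r (u, v) = q v,
      forall u v u', p u * (\sum_(v' : V) g (u, v) (u', v')) = a u u' * r (u, v) &
      forall u v v', q v * (\sum_(u' : U) g (u, v) (u', v')) = b v v' * r (u, v)].

Definition strongly_disjoint (U V : finType) (a : U -> U -> R) (b : V -> V -> R) : Prop :=
  forall g, weight_joining a b g <-> g = tensorw a b.

Definition weakly_disjoint (U V : finType) (a : U -> U -> R) (b : V -> V -> R) : Prop :=
  forall g, weight_joining a b g -> forall u v, degf g (u, v) = degf a u * degf b v.

End Defs.

(* A joining whose degree function is the product one differs from a ⊗ b by a
   function d that is symmetric, sums to zero along each coordinate and is
   supported on pairs of edges.  Fix one coordinate of d when the other factor is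
   a tree: a non-zero entry can always be continued without backtracking, which
   would close a cycle, so d = 0.  Hence a weakly disjoint pair in which one graph
   is a tree is strongly disjoint.  Conversely, if both graphs are trees they are
   bipartite, and doubling a ⊗ b on the vertex pairs of matching colours is a
   second joining; if both contain cycles, adding to a ⊗ b a small multiple of
   the product of the two circulations around these cycles is one. *)

From HB Require Import structures.
From mathcomp Require Import all_boot all_order all_algebra.
From mathcomp Require Import reals.
From mathcomp Require Import ring lra zify.
From Stdlib Require Import Classical FunctionalExtensionality.
Set Implicit Arguments. Unset Strict Implicit. Unset Printing Implicit Defensive.

Section NonBacktrackingCycle.
Variables (T : finType) (s : rel T).
Hypotheses (s_sym : symmetric s) (s_irr : irreflexive s).
Hypothesis s_nb : forall x y, s x y -> exists2 z, z != x & s y z.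

Lemma nonbacktracking_cycle x y :
  s x y -> exists c, [/\ (3 <= size c)%N, uniq c & cycle s c].
Proof.
(* The walk is stored backwards: y1 is its current vertex and y0 the previous one. *)
suff walk n w y0 y1 : (#|T| - size w <= n)%N -> uniq [:: y1, y0 & w] ->
    path s y1 (y0 :: w) -> exists c, [/\ (3 <= size c)%N, uniq c & cycle s c].
  move=> sxy; apply: (walk #|T| [::] x y) => /=.
  - by rewrite subn0.
  - by rewrite inE andbT; apply: contraTneq sxy => ->; rewrite s_irr.
  - by rewrite s_sym sxy.
elim: n w y0 y1 => [|n IH] w y0 y1 le_n uniq_w path_w.
  move: le_n; rewrite leqn0 subn_eq0 => /(leq_trans (max_card (mem [:: y1, y0 & w]))).
  by rewrite (card_uniqP uniq_w) /= ltnNge leqW.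
have [z z_y0 s_y1z] : exists2 z, z != y0 & s y1 z.
  by apply: s_nb; move: path_w; rewrite /= s_sym => /andP[].
have [z_w|z_w] := boolP (z \in [:: y1, y0 & w]); last first.
  apply: (IH (y0 :: w) y1 z) => /=.
  - by rewrite subnS -subn1 leq_subLR add1n.
  - by rewrite z_w.
  - by rewrite s_sym s_y1z.
have {}z_w : z \in w.
  by move: z_w; rewrite !inE (negbTE z_y0) /=; case: eqP s_y1z => // ->; rewrite s_irr.
move: uniq_w path_w; case/splitPr: z_w => w1 w2 uniq_w path_w.
exists [:: y1, y0 & rcons w1 z]; split.
- by rewrite /= size_rcons.
- by move: uniq_w; rewrite -cat_rcons -!cat_cons cat_uniq => /andP[].
- move: path_w; rewrite -cat_rcons -cat_cons cat_path => /andP[path_w _].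
  by rewrite /cycle rcons_path path_w /= last_rcons s_sym.
Qed.

End NonBacktrackingCycle.

Lemma not_uniq_split (T : eqType) (s : seq T) :
  ~~ uniq s -> exists x s1 s2 s3, s = s1 ++ x :: s2 ++ x :: s3.
Proof.
elim: s => [|x s IH] //=; rewrite negb_and negbK => /orP[/splitPr[s2 s3]|].
  by exists x, [::], s2, s3.
by case/IH=> y [s1 [s2 [s3 ->]]]; exists y, (x :: s1), s2, s3.
Qed.

Section OddCycle.
Variables (T : eqType) (e : rel T).
Hypothesis e_irr : irreflexive e.

Lemma cycle_cat_split x c1 c2 :
  cycle e (x :: c1 ++ x :: c2) -> cycle e (x :: c1) /\ cycle e (x :: c2).
Proof. by rewrite /= rcons_cat cat_path /= !rcons_path => /and3P[-> -> ->]. Qed.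

Lemma odd_closed_walk_cycle c : cycle e c -> odd (size c) ->
  exists p, [/\ (3 <= size p)%N, uniq p & cycle e p].
Proof.
have [n] := ubnP (size c); elim: n c => // n IH c lt_c.
have [c_uniq cyc odd_c|/not_uniq_split[x [c1 [c2 [c3 Ec]]]] cyc] := boolP (uniq c).
  exists c; split => //.
  by case: c cyc odd_c {lt_c c_uniq} => [|x [|y [|z t]]] //=; rewrite e_irr.
have /cycle_cat_split[cyc1 cyc2] : cycle e (x :: c2 ++ x :: (c3 ++ c1)).
  by rewrite -(rot_cycle (size c1)) Ec rot_size_cat /= -catA in cyc.
have size_c : size c = ((size c2).+1 + (size (c3 ++ c1)).+1)%N.
  by rewrite Ec !size_cat /= size_cat /=; lia.
rewrite size_c oddD; case: (boolP (odd (size c2).+1)) => /= [odd1 _|_ odd2].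
  by apply: (IH (x :: c2)) => //=; move: lt_c; rewrite size_c; lia.
by apply: (IH (x :: c3 ++ c1)) => //=; move: lt_c; rewrite size_c; lia.
Qed.

End OddCycle.

Section Bipartite.
Variables (T : finType) (e : rel T).
Hypotheses (e_sym : symmetric e) (e_irr : irreflexive e).
Hypothesis e_acyclic : forall c, (3 <= size c)%N -> uniq c -> ~~ cycle e c.
Hypothesis e_connected : forall x y, connect e x y.

(* A walk from (x, false) to (x, true) in this double cover projects to an odd
   closed walk through x. *)
Definition parity_cover : rel (T * bool) := fun x y => e x.1 y.1 && (y.2 == ~~ x.2).

Lemma parity_cover_sym : symmetric parity_cover.
Proof.
by move=> x y; rewrite /parity_cover e_sym; case: x.2; case: y.2.
Qed.

Lemma path_parity_cover x p : path parity_cover x p ->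
  path e x.1 (map fst p) /\ (last x p).2 = x.2 (+) odd (size p).
Proof.
elim: p x => [|y p IH] x /=; first by rewrite addbF.
case/andP=> /andP[exy /eqP y2] /IH[-> ->]; rewrite exy y2.
by split => //; case: x.2; case: odd.
Qed.

Lemma parity_cover_no_flip x : ~~ connect parity_cover (x, false) (x, true).
Proof.
apply/connectP => -[p]; case/lastP: p => [//|p z] walk.
rewrite last_rcons => z_eq; have [cyc] := path_parity_cover walk.
rewrite last_rcons size_rcons -z_eq /= => odd_p.
have {}cyc : cycle e (x :: map fst p) by rewrite map_rcons -z_eq in cyc.
have {}odd_p : odd (size (x :: map fst p)).
  by move: odd_p; rewrite /= size_map; case: odd.
have [c [c3 c_uniq]] := odd_closed_walk_cycle e_irr cyc odd_p.
by rewrite (negbTE (e_acyclic c3 c_uniq)).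
Qed.

Lemma connect_parity_cover x y b : exists b', connect parity_cover (x, b) (y, b').
Proof.
case/connectP: (e_connected x y) => p + ->; elim: p x b => [|z p IH] x b /=.
  by exists b.
case/andP=> exz /(IH _ (~~ b))[b' conn]; exists b'.
by apply: connect_trans conn; apply: connect1; rewrite /parity_cover /= exz eqxx.
Qed.

Lemma acyclic_connected_bipartite :
  exists col : T -> bool, forall x y, e x y -> col y = ~~ col x.
Proof.
case: (pickP (fun _ : T => true)) => [r _|T0]; last by exists xpred0 => x; have := T0 x.
pose col x := connect parity_cover (r, false) (x, true).
have reachE x b : connect parity_cover (r, false) (x, b) = (b == col x).
  case: b; first by rewrite eq_sym eqb_id.
  have not_both : connect parity_cover (r, false) (x, false) -> ~~ col x.
    move=> to_false; apply: contraNN (parity_cover_no_flip x) => to_true.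
    by apply: connect_trans to_true; rewrite (sym_connect_sym parity_cover_sym).
  rewrite eq_sym eqbF_neg; apply/idP/idP => [/not_both //|not_col].
  have [[] reach] := connect_parity_cover r x false => //.
  by case/negP: not_col; exact: reach.
exists col => x y exy.
have := reachE x (col x); rewrite eqxx => reach_x.
suff : connect parity_cover (r, false) (y, ~~ col x) by rewrite reachE => /eqP.
by apply: connect_trans reach_x (connect1 _); rewrite /parity_cover /= exy eqxx.
Qed.

End Bipartite.

Import Order.TTheory GRing.Theory Num.Theory.
Local Open Scope ring_scope.

Section Weights.
Variable R : realType.

Lemma sum_pair (U V : finType) (f : U * V -> R) :
  \sum_x f x = \sum_u \sum_v f (u, v).
Proof. by rewrite pair_bigA; apply: eq_bigr => -[]. Qed.

Lemma sum_eq0_other (T : finType) (f : T -> R) x :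
  \sum_y f y = 0 -> f x != 0 -> exists2 y, y != x & f y != 0.
Proof.
move=> sum_f f_x.
case: (pickP (fun y => (y != x) && (f y != 0))) => [y /andP[]|others]; first by exists y.
have rest : \sum_(y | y != x) f y = 0.
  by apply: big1 => y y_x; apply/eqP; move: (others y); rewrite y_x => /negbFE.
by move: sum_f f_x; rewrite (bigD1 x) //= rest addr0 => ->; rewrite eqxx.
Qed.

Lemma exists_pos_lower_bound (T : finType) (f : T -> R) :
  exists2 e, 0 < e & forall t, 0 < f t -> e <= f t.
Proof.
exists (\big[Num.min/1]_(t | 0 < f t) f t); first exact: lt_bigmin.
by move=> t; apply: bigmin_le_cond.
Qed.

Lemma sum_indicator (T : finType) (z : T) : \sum_y ((y == z)%:R : R) = 1.
Proof. by rewrite (bigD1 z) //= eqxx big1 ?addr0 // => y /negbTE ->. Qed.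

Lemma degf_eq0 (T : finType) (c : T -> T -> R) x :
  (forall y, 0 <= c x y) -> degf c x = 0 -> forall y, c x y = 0.
Proof. by move=> c_ge0 deg0 y; apply: (psumr_eq0P (fun y _ => c_ge0 y) deg0). Qed.

Lemma edge_sym (T : finType) (c : T -> T -> R) :
  (forall x y, c x y = c y x) -> symmetric (edge c).
Proof. by move=> c_sym x y; rewrite /edge c_sym. Qed.

Lemma edge_irr (T : finType) (c : T -> T -> R) : no_self_loops c -> irreflexive (edge c).
Proof. by move=> c_loop x; rewrite /edge c_loop ltxx. Qed.

Lemma acyclic_balanced_eq0 (T : finType) (e : rel T) (f : T -> T -> R) :
  symmetric e -> irreflexive e ->
  (forall c, (3 <= size c)%N -> uniq c -> ~~ cycle e c) ->
  (forall x y, f x y != 0 -> e x y) ->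
  (forall x, \sum_y f x y = 0) -> (forall y, \sum_x f x y = 0) ->
  forall x y, f x y = 0.
Proof.
move=> e_sym e_irr e_acyclic f_supp f_row f_col x y; apply/eqP/contraT => f_xy.
pose s x y := (f x y != 0) || (f y x != 0).
have s_e u w : s u w -> e u w by case/orP=> /f_supp //; rewrite e_sym.
have s_sym : symmetric s by move=> u w; rewrite /s orbC.
have s_irr : irreflexive s by move=> u; apply/negP => /s_e; rewrite e_irr.
have s_nb u w : s u w -> exists2 z, z != u & s w z.
  case/orP=> [f_uw|f_wu].
    have [z z_u f_zw] := sum_eq0_other (f_col w) f_uw.
    by exists z; rewrite // /s f_zw orbT.
  have [z z_u f_wz] := sum_eq0_other (f_row w) f_wu.
  by exists z; rewrite // /s f_wz.
have s_xy : s x y by rewrite /s f_xy.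
have [c [c3 c_uniq c_cycle]] := nonbacktracking_cycle s_sym s_irr s_nb s_xy.
by have := e_acyclic c c3 c_uniq; rewrite (sub_cycle s_e c_cycle).
Qed.

Lemma weight_edge (T : finType) (c : T -> T -> R) : is_weight c -> exists x y, edge c x y.
Proof.
case=> c_ge0 _ c_sum.
case: (pickP (fun z : T * T => edge c z.1 z.2)) => [[x y] exy|no_edge]; first by exists x, y.
have c0 x y : c x y = 0.
  by apply/le_anti; rewrite c_ge0 andbT leNgt; exact: negbT (no_edge (x, y)).
have : \sum_x \sum_y c x y = 0 by apply: big1 => x _; apply: big1 => y _; exact: c0.
by rewrite c_sum => /eqP; rewrite oner_eq0.
Qed.

Lemma proper_coloring_half (T : finType) (c : T -> T -> R) (col : T -> bool) :
  is_weight c -> (forall x y, edge c x y -> col y = ~~ col x) ->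
  forall bb, 2 * \sum_x (col x == bb)%:R * degf c x = 1.
Proof.
case=> c_ge0 c_sym c_sum col_edge bb.
pose S b := \sum_x \sum_y (col x == b)%:R * c x y.
have S_deg : \sum_x (col x == bb)%:R * degf c x = S bb.
  by apply: eq_bigr => x _; rewrite mulr_sumr.
have S_flip : S bb = S (~~ bb).
  transitivity (\sum_x \sum_y (col y == ~~ bb)%:R * c x y).
    apply: eq_bigr => x _; apply: eq_bigr => y _.
    have [c0|c_neq0] := eqVneq (c x y) 0; first by rewrite c0 !mulr0.
    have exy : edge c x y by rewrite /edge lt0r c_neq0 c_ge0.
    by rewrite (col_edge _ _ exy); case: (col x); case: (bb).
  by rewrite exchange_big; apply: eq_bigr => y _; apply: eq_bigr => x _; rewrite c_sym.
have S_sum : S bb + S (~~ bb) = 1.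
  rewrite -c_sum -big_split; apply: eq_bigr => x _; rewrite -big_split.
  apply: eq_bigr => y _; rewrite /= -mulrDl.
  by case: (col x); case: (bb); rewrite /= ?add0r ?addr0 mul1r.
by rewrite S_deg mulr_natl mulr2n {2}S_flip.
Qed.

End Weights.

Section Joinings.
Variable R : realType.
Variables (U V : finType) (a : U -> U -> R) (b : V -> V -> R).
Hypotheses (ha : is_weight a) (hb : is_weight b).

Lemma degf_tensorw u v : degf (tensorw a b) (u, v) = degf a u * degf b v.
Proof.
rewrite /degf sum_pair mulr_suml; apply: eq_bigr => u' _.
by rewrite mulr_sumr.
Qed.

Lemma weight_joining_rescaled (k : U -> V -> R) (g : U * V -> U * V -> R) :
  (forall x y, 0 <= g x y) -> (forall x y, g x y = g y x) ->
  (forall u v u', \sum_v' g (u, v) (u', v') = a u u' * (k u v * degf b v)) ->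
  (forall u v v', \sum_u' g (u, v) (u', v') = b v v' * (k u v * degf a u)) ->
  (forall u, \sum_v k u v * degf b v = 1) ->
  (forall v, \sum_u k u v * degf a u = 1) ->
  weight_joining a b g.
Proof.
move=> g_ge0 g_sym g_snd g_fst k_fst k_snd; have [_ _ a_sum] := ha.
have deg_g u v : degf g (u, v) = degf a u * (k u v * degf b v).
  by rewrite /degf sum_pair mulr_suml; apply: eq_bigr => u' _; rewrite g_snd.
have marg_fst u : \sum_v degf g (u, v) = degf a u.
  by rewrite -[RHS]mulr1 -(k_fst u) mulr_sumr; apply: eq_bigr => v _; rewrite deg_g.
split.
- split => //; rewrite -a_sum; transitivity (\sum_x degf g x) => //.
  by rewrite sum_pair; apply: eq_bigr => u _; rewrite marg_fst.
- exact: marg_fst.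
- move=> v; rewrite -[RHS]mulr1 -(k_snd v) mulr_sumr.
  by apply: eq_bigr => u _; rewrite deg_g; ring.
- by move=> u v u'; rewrite g_snd deg_g; ring.
- by move=> u v v'; rewrite g_fst deg_g; ring.
Qed.

Lemma tensorw_add_joining (h : U * V -> U * V -> R) :
  (forall x y, 0 <= tensorw a b x y + h x y) -> (forall x y, h x y = h y x) ->
  (forall u v v', \sum_u' h (u, v) (u', v') = 0) ->
  (forall u v u', \sum_v' h (u, v) (u', v') = 0) ->
  weight_joining a b (fun x y => tensorw a b x y + h x y).
Proof.
have [_ a_sym a_sum] := ha; have [_ b_sym b_sum] := hb.
move=> g_ge0 h_sym h_fst h_snd.
apply: (weight_joining_rescaled (k := fun _ _ => 1)) => //.
- by move=> x y; rewrite h_sym /tensorw a_sym b_sym.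
- by move=> u v u'; rewrite big_split /= h_snd addr0 mul1r /degf mulr_sumr.
- move=> u v v'; rewrite big_split /= h_fst addr0 mul1r /degf mulr_sumr.
  by apply: eq_bigr => u' _; rewrite mulrC.
- by move=> u; under eq_bigr do rewrite mul1r; exact: b_sum.
- by move=> v; under eq_bigr do rewrite mul1r; exact: a_sum.
Qed.

Lemma tensorw_joining : weight_joining a b (tensorw a b).
Proof.
have [a_ge0 a_sym a_sum] := ha; have [b_ge0 b_sym b_sum] := hb.
apply: (weight_joining_rescaled (k := fun _ _ => 1)).
- by move=> x y; rewrite mulr_ge0.
- by move=> x y; rewrite /tensorw a_sym b_sym.
- by move=> u v u'; rewrite mul1r /degf mulr_sumr.
- move=> u v v'; rewrite mul1r /degf mulr_sumr.
  by apply: eq_bigr => u' _; rewrite mulrC.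
- by move=> u; under eq_bigr do rewrite mul1r; exact: b_sum.
- by move=> v; under eq_bigr do rewrite mul1r; exact: a_sum.
Qed.

Section ProductDegree.
Variable g : U * V -> U * V -> R.
Hypothesis g_join : weight_joining a b g.
Hypothesis g_deg : forall u v, degf g (u, v) = degf a u * degf b v.

Lemma joining_sum_fst u v v' : \sum_u' g (u, v) (u', v') = degf a u * b v v'.
Proof.
have [[g_ge0 _ _] _ _ _ g_fst] := g_join; have [b_ge0 _ _] := hb.
have [b_v0|b_v_neq0] := eqVneq (degf b v) 0; last first.
  by apply: (mulfI b_v_neq0); rewrite g_fst g_deg; ring.
have g_v0 : forall y, g (u, v) y = 0.
  by apply: (degf_eq0 (g_ge0 (u, v))); rewrite g_deg b_v0 mulr0.
by rewrite (degf_eq0 (b_ge0 v) b_v0) mulr0 big1.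
Qed.

Lemma joining_sum_snd u v u' : \sum_v' g (u, v) (u', v') = a u u' * degf b v.
Proof.
have [[g_ge0 _ _] _ _ g_snd _] := g_join; have [a_ge0 _ _] := ha.
have [a_u0|a_u_neq0] := eqVneq (degf a u) 0; last first.
  by apply: (mulfI a_u_neq0); rewrite g_snd g_deg; ring.
have g_u0 : forall y, g (u, v) y = 0.
  by apply: (degf_eq0 (g_ge0 (u, v))); rewrite g_deg a_u0 mul0r.
by rewrite (degf_eq0 (a_ge0 u) a_u0) mul0r big1.
Qed.

Lemma joining_eq_tensorw : acyclic a \/ acyclic b -> g = tensorw a b.
Proof.
move=> acyclic_ab; have [[g_ge0 g_sym _] _ _ _ _] := g_join.
have [a_ge0 a_sym _] := ha; have [b_ge0 b_sym _] := hb.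
pose d x y := g x y - tensorw a b x y.
have d_sym x y : d x y = d y x by rewrite /d g_sym /tensorw a_sym b_sym.
have d_fst u v v' : \sum_u' d (u, v) (u', v') = 0.
  by rewrite sumrB joining_sum_fst /degf mulr_suml subrr.
have d_snd u v u' : \sum_v' d (u, v) (u', v') = 0.
  by rewrite sumrB joining_sum_snd /degf mulr_sumr subrr.
have d_edges x y : d x y != 0 -> edge a x.1 y.1 && edge b x.2 y.2.
  case: x y => [u v] [u' v']; apply: contraR; rewrite negb_and /edge -!leNgt.
  case/orP=> [a_le0|b_le0].
    have a0 : a u u' = 0 by apply/le_anti; rewrite a_le0 a_ge0.
    have sum0 : \sum_v' g (u, v) (u', v') = 0 by rewrite joining_sum_snd a0 mul0r.
    by rewrite /d /tensorw /= a0 mul0r (psumr_eq0P (fun _ _ => g_ge0 _ _) sum0) ?subr0.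
  have b0 : b v v' = 0 by apply/le_anti; rewrite b_le0 b_ge0.
  have sum0 : \sum_u' g (u, v) (u', v') = 0 by rewrite joining_sum_fst b0 mulr0.
  by rewrite /d /tensorw /= b0 mulr0 (psumr_eq0P (fun _ _ => g_ge0 _ _) sum0) ?subr0.
suff d0 x y : d x y = 0.
  apply: functional_extensionality => x; apply: functional_extensionality => y.
  by apply/eqP; rewrite -subr_eq0; apply/eqP/d0.
case: acyclic_ab => [[a_loop a_acyclic]|[b_loop b_acyclic]]; case: x y => [u v] [u' v'].
- apply: (acyclic_balanced_eq0 (f := fun x y => d (x, v) (y, v')) (edge_sym a_sym)
    (edge_irr a_loop) a_acyclic) => [x y /d_edges/andP[] //|x|y].
    exact: d_fst.
  by under eq_bigr do rewrite d_sym; exact: d_fst.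
- apply: (acyclic_balanced_eq0 (f := fun x y => d (u, x) (u', y)) (edge_sym b_sym)
    (edge_irr b_loop) b_acyclic) => [x y /d_edges/andP[] //|x|y].
    exact: d_snd.
  by under eq_bigr do rewrite d_sym; exact: d_snd.
Qed.

End ProductDegree.

End Joinings.

Section ColorMatched.
Variable R : realType.
Variables (U V : finType) (a : U -> U -> R) (b : V -> V -> R).
Hypotheses (ha : is_weight a) (hb : is_weight b).
Variables (colU : U -> bool) (colV : V -> bool).
Hypothesis colU_edge : forall x y, edge a x y -> colU y = ~~ colU x.
Hypothesis colV_edge : forall x y, edge b x y -> colV y = ~~ colV x.

Definition color_matched (x y : U * V) : R :=
  2 * (colU x.1 == colV x.2)%:R * tensorw a b x y.

Lemma color_matched_joining : weight_joining a b color_matched.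
Proof.
have [a_ge0 a_sym _] := ha; have [b_ge0 b_sym _] := hb.
apply: (weight_joining_rescaled ha (k := fun u v => 2 * (colU u == colV v)%:R)).
- by move=> x y; rewrite !mulr_ge0 ?ler0n.
- move=> [u v] [u' v']; rewrite /color_matched /tensorw /= a_sym b_sym.
  have [a0|a_neq0] := eqVneq (a u' u) 0; first by rewrite a0 !mul0r !mulr0.
  have [b0|b_neq0] := eqVneq (b v' v) 0; first by rewrite b0 !mulr0.
  have ea : edge a u u' by rewrite /edge lt0r a_sym a_neq0 a_ge0.
  have eb : edge b v v' by rewrite /edge lt0r b_sym b_neq0 b_ge0.
  by rewrite (colU_edge ea) (colV_edge eb); case: (colU u); case: (colV v).
- move=> u v u'; rewrite /degf !mulr_sumr; apply: eq_bigr => v' _.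
  by rewrite /color_matched /tensorw /= mulrCA.
- move=> u v v'; rewrite /degf !mulr_sumr; apply: eq_bigr => u' _.
  by rewrite /color_matched /tensorw /= [a u u' * _]mulrC mulrCA.
- move=> u; rewrite -[RHS](proper_coloring_half hb colV_edge (colU u)) mulr_sumr.
  by apply: eq_bigr => v _; rewrite eq_sym mulrA.
- move=> v; rewrite -[RHS](proper_coloring_half ha colU_edge (colV v)) mulr_sumr.
  by apply: eq_bigr => u _; rewrite mulrA.
Qed.

Lemma color_matched_neq_tensorw : color_matched <> tensorw a b.
Proof.
have [_ a_sym _] := ha.
have [u [u' ea]] := weight_edge ha; have [v [v' eb]] := weight_edge hb.
have [x [x' [exx' col_x]]] : exists x x', edge a x x' /\ colU x != colV v.
  case: (boolP (colU u == colV v)) => [/eqP col_u|col_u]; last by exists u, u'.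
  by exists u', u; rewrite (colU_edge ea) col_u /edge a_sym; case: (colV v).
move=> /(congr1 (fun g => g (x, v) (x', v'))).
rewrite /color_matched /tensorw /= (negbTE col_x) mulr0 mul0r => /esym/eqP.
by rewrite mulf_eq0 !gt_eqF.
Qed.

End ColorMatched.

Section CycleFlow.
Variable R : realType.

Definition cycle_flow (T : finType) (s : seq T) (x y : T) : R :=
  (x \in s)%:R * ((y == next s x)%:R - (y == prev s x)%:R).

Lemma cycle_flow_head (T : finType) (x0 x1 x2 : T) t :
  uniq [:: x0, x1, x2 & t] -> cycle_flow [:: x0, x1, x2 & t] x1 x0 = -1.
Proof.
rewrite /= => /andP[x0_notin _].
have x1_x0 : x1 != x0 by apply: contraNneq x0_notin => <-; rewrite mem_head.
have x0_x2 : x0 != x2 by apply: contraNneq x0_notin => ->; rewrite !inE eqxx orbT.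
rewrite /cycle_flow /next /prev /= (negbTE x1_x0) !eqxx (negbTE x0_x2).
by rewrite !inE eqxx orbT /= mul1r sub0r.
Qed.

Variables (T : finType) (s : seq T).

Lemma cycle_flow_sum x : \sum_y cycle_flow s x y = 0.
Proof. by rewrite -mulr_sumr sumrB !sum_indicator subrr mulr0. Qed.

Lemma cycle_flowN x y : uniq s -> cycle_flow s y x = - cycle_flow s x y.
Proof.
move=> s_uniq.
have off_cycle z w : z \notin s -> w \in s ->
    (z == next s w) = false /\ (z == prev s w) = false.
  by move=> z_s w_s; split; apply: contraNF z_s => /eqP ->; rewrite ?mem_next ?mem_prev.
rewrite /cycle_flow; have [x_s|x_s] := boolP (x \in s); have [y_s|y_s] := boolP (y \in s).
- have x_next : (x == next s y) = (y == prev s x).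
    by apply/eqP/eqP => [->|->]; rewrite ?prev_next ?next_prev.
  have x_prev : (x == prev s y) = (y == next s x).
    by apply/eqP/eqP => [->|->]; rewrite ?prev_next ?next_prev.
  by rewrite x_next x_prev !mul1r opprB.
- by have [-> ->] := off_cycle y x y_s x_s; rewrite mul0r subrr mulr0 oppr0.
- by have [-> ->] := off_cycle x y x_s y_s; rewrite mul0r subrr mulr0 oppr0.
- by rewrite !mul0r oppr0.
Qed.

Lemma cycle_flow_le1 x y : `|cycle_flow s x y| <= 1.
Proof.
rewrite /cycle_flow; case: (x \in s); case: (y == next s x); case: (y == prev s x).
all: by rewrite /= ?mul0r ?mul1r ?subrr ?subr0 ?sub0r ?normrN ?normr0 ?normr1.
Qed.

Lemma cycle_flow_edge (c : T -> T -> R) x y :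
  (forall x y, c x y = c y x) -> cycle (edge c) s -> cycle_flow s x y != 0 -> edge c x y.
Proof.
move=> c_sym s_cycle; rewrite /cycle_flow.
have [x_s|] := boolP (x \in s); last by rewrite mul0r eqxx.
have [->|_] := eqVneq y (next s x); first by move=> _; exact: next_cycle s_cycle x_s.
have [->|_] := eqVneq y (prev s x); last by rewrite subrr mulr0 eqxx.
by move=> _; rewrite /edge c_sym; exact: prev_cycle s_cycle x_s.
Qed.

End CycleFlow.

Section NotStronglyDisjoint.
Variable R : realType.
Variables (U V : finType) (a : U -> U -> R) (b : V -> V -> R).
Hypotheses (ha : is_weight a) (hb : is_weight b).

Lemma acyclic_not_strongly_disjoint :
  acyclic a -> acyclic b -> connected_graph a -> connected_graph b ->
  ~ strongly_disjoint a b.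
Proof.
have [_ a_sym _] := ha; have [_ b_sym _] := hb.
move=> [a_loop a_acyclic] [b_loop b_acyclic] a_conn b_conn sd.
have [colU colU_edge] :=
  acyclic_connected_bipartite (edge_sym a_sym) (edge_irr a_loop) a_acyclic a_conn.
have [colV colV_edge] :=
  acyclic_connected_bipartite (edge_sym b_sym) (edge_irr b_loop) b_acyclic b_conn.
apply: (color_matched_neq_tensorw (colV := colV) ha hb colU_edge); apply/sd.
exact: color_matched_joining.
Qed.

Lemma tensorw_add_cycle_flows_ge0 sU sV e u u' v v' :
  cycle (edge a) sU -> cycle (edge b) sV -> 0 <= e ->
  (0 < a u u' * b v v' -> e <= a u u' * b v v') ->
  0 <= a u u' * b v v' + e * (cycle_flow R sU u u' * cycle_flow R sV v v').
Proof.
have [a_ge0 a_sym _] := ha; have [b_ge0 b_sym _] := hb.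
move=> cU cV e_ge0 e_le; have tensor_ge0 := mulr_ge0 (a_ge0 u u') (b_ge0 v v').
have [fU0|fU] := eqVneq (cycle_flow R sU u u') 0; first by rewrite fU0 mul0r mulr0 addr0.
have [fV0|fV] := eqVneq (cycle_flow R sV v v') 0; first by rewrite fV0 !mulr0 addr0.
have ea := cycle_flow_edge a_sym cU fU; have eb := cycle_flow_edge b_sym cV fV.
have {}e_le : e <= a u u' * b v v' by apply: e_le; rewrite mulr_gt0.
have flow_ge : -1 <= cycle_flow R sU u u' * cycle_flow R sV v v'.
  have : `|cycle_flow R sU u u' * cycle_flow R sV v v'| <= 1.
    by rewrite normrM mulr_ile1 ?normr_ge0 ?cycle_flow_le1.
  by rewrite ler_norml => /andP[].
have : - e <= e * (cycle_flow R sU u u' * cycle_flow R sV v v').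
  by rewrite -[X in X <= _]mulrN1 ler_wpM2l.
lra.
Qed.

Lemma cyclic_not_strongly_disjoint sU sV :
  (3 <= size sU)%N -> uniq sU -> cycle (edge a) sU ->
  (3 <= size sV)%N -> uniq sV -> cycle (edge b) sV ->
  ~ strongly_disjoint a b.
Proof.
case: sU => [|x0 [|x1 [|x2 tU]]] // _ uU cU; case: sV => [|y0 [|y1 [|y2 tV]]] // _ uV cV.
set sU := [:: x0, x1, x2 & tU] in uU cU *; set sV := [:: y0, y1, y2 & tV] in uV cV *.
have [e e_gt0 e_le] :=
  exists_pos_lower_bound (fun z : (U * U) * (V * V) => a z.1.1 z.1.2 * b z.2.1 z.2.2).
pose h (x y : U * V) := e * (cycle_flow R sU x.1 y.1 * cycle_flow R sV x.2 y.2).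
have h_join : weight_joining a b (fun x y => tensorw a b x y + h x y).
  apply: tensorw_add_joining => //.
  - move=> [u v] [u' v']; apply: tensorw_add_cycle_flows_ge0 => //; first exact: ltW.
    exact: (e_le ((u, u'), (v, v'))).
  - move=> [u v] [u' v']; rewrite /h /= [cycle_flow _ sU u' u]cycle_flowN //.
    by rewrite [cycle_flow _ sV v' v]cycle_flowN // mulrNN.
  - by move=> u v v'; rewrite /h /= -mulr_sumr -mulr_suml cycle_flow_sum mul0r mulr0.
  - by move=> u v u'; rewrite /h /= -mulr_sumr -mulr_sumr cycle_flow_sum !mulr0.
move=> sd; have := congr1 (fun g => g (x1, y1) (x0, y0)) ((sd _).1 h_join).
rewrite /h /= !cycle_flow_head // mulrNN mulr1; lra.
Qed.

End NotStronglyDisjoint.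

Lemma not_acyclic_cycle (R : realType) (T : finType) (c : T -> T -> R) :
  no_self_loops c -> ~ acyclic c ->
  exists p, [/\ (3 <= size p)%N, uniq p & cycle (edge c) p].
Proof.
move=> c_loop not_acyclic; apply: NNPP => no_cycle; apply: not_acyclic.
split=> // p p3 p_uniq; apply/negP => p_cycle; apply: no_cycle; by exists p.
Qed.

Theorem theorem5p5 (R : realType) (U V : finType)
    (a : U -> U -> R) (b : V -> V -> R) :
  is_weight a -> is_weight b ->
  no_self_loops a -> no_self_loops b ->
  connected_graph a -> connected_graph b ->
  (strongly_disjoint a b <->
     (weakly_disjoint a b /\
      ((is_tree a /\ ~ is_tree b) \/ (~ is_tree a /\ is_tree b)))).
Proof.
move=> ha hb a_loop b_loop a_conn b_conn.
have treeE (T : finType) (c : T -> T -> R) :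
  connected_graph c -> is_tree c <-> acyclic c by move=> c_conn; split=> [[]|].
rewrite !treeE //; split=> [sd|[wd one_tree] g].
- split=> [g /sd -> u v|]; first exact: degf_tensorw.
  have [a_acyclic|a_cyclic] := classic (acyclic a);
    have [b_acyclic|b_cyclic] := classic (acyclic b); try tauto.
    by case: (acyclic_not_strongly_disjoint ha hb a_acyclic b_acyclic a_conn b_conn sd).
  have [sU [sU3 sU_uniq sU_cycle]] := not_acyclic_cycle a_loop a_cyclic.
  have [sV [sV3 sV_uniq sV_cycle]] := not_acyclic_cycle b_loop b_cyclic.
  by case: (cyclic_not_strongly_disjoint ha hb sU3 sU_uniq sU_cycle sV3 sV_uniq sV_cycle sd).
- split=> [g_join|->]; last exact: tensorw_joining.
  by apply: (joining_eq_tensorw ha hb g_join (wd g g_join)); tauto.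
Qed.
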